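(* Let $n\geq 1$ and let $c_1,c_2$ be two $n$-configurations. Let $G_1,G_2$ be groups such that $c_1$ is realisable in $G_1$ and $c_2$ is realisable in $G_2$. Then the join $c_1\wedge c_2$ is realisable in $G_1\times G_2$.
   Context: Write $[n]=\{1,\dots,n\}$. An $n$-configuration is a map $c\colon \mathcal{P}([n])\setminus\{\emptyset\}\to\{0,1\}$. An $n$-configuration $c$ is realisable in a group $G$ if there exist subgroups $H_1,\dots,H_n\leq G$ such that for every non-empty subset $I\subseteq[n]$, the subgroup $\bigcap_{i\in I}H_i$ is finitely generated if and only if $c(I)=0$. The join of two $n$-configurations $c_1,c_2$ is the $n$-configuration $c_1\wedge c_2$ defined by $(c_1\wedge c_2)(I)=0$ if $c_1(I)=0$ and $c_2(I)=0$, and $(c_1\wedge c_2)(I)=1$ otherwise. *)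

From mathcomp Require Import all_boot.
From Stdlib Require Import List.
Set Implicit Arguments. Unset Strict Implicit. Unset Printing Implicit Defensive.

Record group := Group {
  carrier :> Type;
  gmul : carrier -> carrier -> carrier;
  ginv : carrier -> carrier;
  gone : carrier;
  gmulA : forall x y z, gmul x (gmul y z) = gmul (gmul x y) z;
  gmul1l : forall x, gmul gone x = x;
  gmul1r : forall x, gmul x gone = x;
  gmulVl : forall x, gmul (ginv x) x = gone;
  gmulVr : forall x, gmul x (ginv x) = gone
}.

Definition is_subgroup (G : group) (H : G -> Prop) : Prop :=
  H (gone G) /\ (forall x y, H x -> H y -> H (gmul x y)) /\
  (forall x, H x -> H (ginv x)).

Inductive generated (G : group) (S : list G) : G -> Prop :=
  | gen_in : forall x, List.In x S -> generated S x
  | gen_one : generated S (gone G)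
  | gen_mul : forall x y, generated S x -> generated S y -> generated S (gmul x y)
  | gen_inv : forall x, generated S x -> generated S (ginv x).

Definition fin_gen (G : group) (H : G -> Prop) : Prop :=
  exists S : list G, forall x, H x <-> generated S x.

(* An n-configuration: a map from subsets of [n] = 'I_n to {0,1}, encoded
   as bool (false = 0, true = 1); its value on the empty set is irrelevant. *)
Definition configuration (n : nat) := {set 'I_n} -> bool.

Definition realisable (n : nat) (c : configuration n) (G : group) : Prop :=
  exists H : 'I_n -> G -> Prop,
    (forall i, is_subgroup (H i)) /\
    forall I : {set 'I_n}, I != set0 ->
      (fin_gen (fun x => forall i, i \in I -> H i x) <-> c I = false).

Definition cjoin (n : nat) (c1 c2 : configuration n) : configuration n :=
  fun I => c1 I || c2 I.

Section Prod.
Variables G1 G2 : group.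
Definition pmul (x y : G1 * G2) : G1 * G2 := (gmul x.1 y.1, gmul x.2 y.2).
Definition pinv (x : G1 * G2) : G1 * G2 := (ginv x.1, ginv x.2).
Definition pone : G1 * G2 := (gone G1, gone G2).
Lemma pmulA x y z : pmul x (pmul y z) = pmul (pmul x y) z.
Proof. by rewrite /pmul /= !gmulA. Qed.
Lemma pmul1l x : pmul pone x = x.
Proof. by case: x => a b; rewrite /pmul /= !gmul1l. Qed.
Lemma pmul1r x : pmul x pone = x.
Proof. by case: x => a b; rewrite /pmul /= !gmul1r. Qed.
Lemma pmulVl x : pmul (pinv x) x = pone.
Proof. by rewrite /pmul /= !gmulVl. Qed.
Lemma pmulVr x : pmul x (pinv x) = pone.
Proof. by rewrite /pmul /= !gmulVr. Qed.
Definition prod_group : group :=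
  @Group (G1 * G2)%type pmul pinv pone pmulA pmul1l pmul1r pmulVl pmulVr.
End Prod.

(* Realise c1 by subgroups H1_i <= G1 and c2 by H2_i <= G2, and take
   H_i := H1_i x H2_i in G1 x G2.  Intersections commute with products, so it
   suffices that a product K1 x K2 of subgroups is finitely generated iff both
   factors are: the projections of a generating set of K1 x K2 generate the
   factors, and generating sets of the factors, embedded along the two axes,
   together generate K1 x K2. *)
From mathcomp Require Import all_boot.
Set Implicit Arguments. Unset Strict Implicit.

Section Generation.
Variable G : group.

Lemma generated_subgroup (K : G -> Prop) (S : list G) :
  is_subgroup K -> (forall s, List.In s S -> K s) ->
  forall x, generated S x -> K x.
Proof. by move=> [K1 [KM KV]] KS x; elim=> *; auto. Qed.

Lemma generated_subset (S T : list G) x :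
  (forall s, List.In s S -> List.In s T) -> generated S x -> generated T x.
Proof.
move=> ST; elim=> *; [apply: gen_in; auto | apply: gen_one | exact: gen_mul | exact: gen_inv].
Qed.

Lemma fin_gen_ext (P Q : G -> Prop) :
  (forall x, P x <-> Q x) -> fin_gen P <-> fin_gen Q.
Proof.
move=> PQ; split=> -[S HS]; exists S => x.
- exact: iff_trans (iff_sym (PQ x)) (HS x).
- exact: iff_trans (PQ x) (HS x).
Qed.

End Generation.

Section Morphism.
Variables G H : group.

Definition is_morphism (f : G -> H) : Prop :=
  forall x y, f (gmul x y) = gmul (f x) (f y).

Variable f : G -> H.
Hypothesis fM : is_morphism f.

Lemma morph1 : f (gone G) = gone H.
Proof.
have idem : f (gone G) = gmul (f (gone G)) (f (gone G)) by rewrite -fM gmul1l.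
by rewrite -[RHS](gmulVl (f (gone G))) {3}idem gmulA gmulVl gmul1l.
Qed.

Lemma morphV x : f (ginv x) = ginv (f x).
Proof.
rewrite -[LHS]gmul1r -(gmulVr (f x)) gmulA -fM gmulVl morph1.
exact: gmul1l.
Qed.

Lemma generated_map (S : list G) x :
  generated S x -> generated (List.map f S) (f x).
Proof.
elim=> [y Sy | | y z _ IHy _ IHz | y _ IHy].
- exact/gen_in/List.in_map.
- by rewrite morph1; apply: gen_one.
- by rewrite fM; apply: gen_mul.
- by rewrite morphV; apply: gen_inv.
Qed.

Lemma generated_mapP (S : list G) y :
  generated (List.map f S) y -> exists2 x, generated S x & f x = y.
Proof.
elim=> [y' /List.in_map_iff [x [<- Sx]] | | y1 y2 _ [x1 g1 <-] _ [x2 g2 <-]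
       | y' _ [x gx <-]].
- by exists x; first exact: gen_in.
- by exists (gone G); [apply: gen_one | apply: morph1].
- by exists (gmul x1 x2); [apply: gen_mul | apply: fM].
- by exists (ginv x); [apply: gen_inv | apply: morphV].
Qed.

Lemma fin_gen_image (K : G -> Prop) (L : H -> Prop) :
  (forall y, L y <-> exists2 x, K x & f x = y) -> fin_gen K -> fin_gen L.
Proof.
move=> defL [S defK]; exists (List.map f S) => y; rewrite defL; split.
- by move=> [x /defK gx <-]; apply: generated_map.
- by move=> /generated_mapP [x /defK Kx <-]; exists x.
Qed.

End Morphism.

Section Product.
Variables G1 G2 : group.
Notation G := (prod_group G1 G2).

Definition prod_pred (K1 : G1 -> Prop) (K2 : G2 -> Prop) : G -> Prop :=
  fun p => K1 p.1 /\ K2 p.2.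

Definition inl_prod (a : G1) : G := (a, gone G2).
Definition inr_prod (b : G2) : G := (gone G1, b).

Lemma fst_morphism : is_morphism (fst : G -> G1).
Proof. by []. Qed.

Lemma snd_morphism : is_morphism (snd : G -> G2).
Proof. by []. Qed.

Lemma inl_prod_morphism : is_morphism inl_prod.
Proof. by move=> a a'; rewrite /inl_prod /= /pmul /= gmul1l. Qed.

Lemma inr_prod_morphism : is_morphism inr_prod.
Proof. by move=> b b'; rewrite /inr_prod /= /pmul /= gmul1l. Qed.

Lemma prod_inl_inr a b : ((a, b) : G) = gmul (inl_prod a) (inr_prod b).
Proof. by rewrite /= /pmul /= gmul1l gmul1r. Qed.

Variables (K1 : G1 -> Prop) (K2 : G2 -> Prop).
Hypotheses (sK1 : is_subgroup K1) (sK2 : is_subgroup K2).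

Lemma subgroup_prod : is_subgroup (prod_pred K1 K2).
Proof.
case: sK1 => [K11 [K1M K1V]]; case: sK2 => [K21 [K2M K2V]].
split; first by split.
split; first by move=> x y [? ?] [? ?]; split; [apply: K1M | apply: K2M].
by move=> x [? ?]; split; [apply: K1V | apply: K2V].
Qed.

Lemma fin_gen_prod_fst : fin_gen (prod_pred K1 K2) -> fin_gen K1.
Proof.
apply: (fin_gen_image fst_morphism) => a; split.
- by move=> K1a; exists (a, gone G2) => //; split; last case: sK2.
- by move=> [p [K1p _] <-].
Qed.

Lemma fin_gen_prod_snd : fin_gen (prod_pred K1 K2) -> fin_gen K2.
Proof.
apply: (fin_gen_image snd_morphism) => b; split.
- by move=> K2b; exists (gone G1, b) => //; split; first case: sK1.
- by move=> [p [_ K2p] <-].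
Qed.

Lemma fin_gen_prod_pair : fin_gen K1 -> fin_gen K2 -> fin_gen (prod_pred K1 K2).
Proof.
move=> [S1 defK1] [S2 defK2].
exists (List.map inl_prod S1 ++ List.map inr_prod S2) => -[a b]; split.
- move=> [/defK1 /(generated_map inl_prod_morphism) ga
          /defK2 /(generated_map inr_prod_morphism) gb].
  rewrite prod_inl_inr; apply: gen_mul.
  + by apply: generated_subset ga => s Ss; apply: List.in_or_app; left.
  + by apply: generated_subset gb => s Ss; apply: List.in_or_app; right.
- move=> gab; apply: (generated_subgroup subgroup_prod _ gab) => s.
  move=> /(List.in_app_or _ _ s) [] /List.in_map_iff [x [<- Sx]]; split => /=.
  + exact/defK1/gen_in.
  + by case: sK2.
  + by case: sK1.
  + exact/defK2/gen_in.
Qed.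

Lemma fin_gen_prod :
  fin_gen (prod_pred K1 K2) <-> fin_gen K1 /\ fin_gen K2.
Proof.
split; first by move=> fg; split; [apply: fin_gen_prod_fst | apply: fin_gen_prod_snd].
by move=> [fg1 fg2]; apply: fin_gen_prod_pair.
Qed.

End Product.

Definition bigcap_pred (n : nat) (G : group) (H : 'I_n -> G -> Prop)
    (I : {set 'I_n}) : G -> Prop :=
  fun x => forall i, i \in I -> H i x.

Lemma subgroup_bigcap (n : nat) (G : group) (H : 'I_n -> G -> Prop) (I : {set 'I_n}) :
  (forall i, is_subgroup (H i)) -> is_subgroup (bigcap_pred H I).
Proof.
move=> sH; split; first by move=> i _; case: (sH i).
split=> [x y Hx Hy | x Hx] i Ii; case: (sH i) => _ [HM HV]; auto.
Qed.

Lemma bigcap_prod_pred (n : nat) (G1 G2 : group) (H1 : 'I_n -> G1 -> Prop)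
    (H2 : 'I_n -> G2 -> Prop) (I : {set 'I_n}) (p : prod_group G1 G2) :
  bigcap_pred (fun i => prod_pred (H1 i) (H2 i)) I p <->
  prod_pred (bigcap_pred H1 I) (bigcap_pred H2 I) p.
Proof.
split; first by move=> h; split=> i Ii; case: (h i Ii).
by move=> [h1 h2] i Ii; split; auto.
Qed.

Theorem lemma2p7 (n : nat) (c1 c2 : configuration n) (G1 G2 : group) :
  1 <= n -> realisable c1 G1 -> realisable c2 G2 ->
  realisable (cjoin c1 c2) (prod_group G1 G2).
Proof.
move=> _ [H1 [sH1 R1]] [H2 [sH2 R2]].
exists (fun i => prod_pred (H1 i) (H2 i)); split=> [i | I I0].
  exact: subgroup_prod.
rewrite (fin_gen_ext (bigcap_prod_pred H1 H2 I)).
rewrite fin_gen_prod; [|exact: subgroup_bigcap..].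
rewrite /bigcap_pred (R1 I I0) (R2 I I0) /cjoin.
by case: (c1 I); case: (c2 I); intuition.
Qed.
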